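(* Let $\alpha\in\{2,3,\ldots\}$, $n\in\mathbb{N}$ and $r\in\mathbb{Z}$, and set $n_*=\lfloor n/2^{\alpha-2}\rfloor$, $r_*=\lfloor r/2^{\alpha-2}\rfloor$. Then $$2^{-\left\lfloor\frac{n-2^{\alpha-1}}{\varphi(2^{\alpha})}\right\rfloor}\sum_{k\equiv r\ (\mathrm{mod}\ 2^{\alpha})}\binom nk\equiv1\pmod 2$$ if and only if $\binom{\{n\}_{2^{\alpha-2}}}{\{r\}_{2^{\alpha-2}}}$ is odd and one of the following holds: (a) $n_*>2$ and $n_*\not\equiv2r_*+2\pmod 4$; (b) $n_*=2$ and $2\mid r_*$.
   Context: $\varphi$ is Euler's totient function. $\{a\}_m$ denotes the least nonnegative residue of the integer $a$ modulo the positive integer $m$. The sum runs over all integers $k\equiv r\pmod{2^\alpha}$ with $\binom nk=0$ unless $0\le k\le n$; the left side is an integer (possibly multiplied by a nonnegative power of $2$ when the floor is negative). *)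

From HB Require Import structures.
From mathcomp Require Import all_boot all_order all_algebra.
Set Implicit Arguments. Unset Strict Implicit. Unset Printing Implicit Defensive.
Import Order.TTheory GRing.Theory Num.Theory.

(* S(n, r, alpha) = sum over integers k = r (mod 2^alpha) of 'C(n, k);
   terms with k outside [0, n] vanish, so we sum over 0 <= k <= n. *)
Definition binsum_mod (alpha n : nat) (r : int) : nat :=
  \sum_(0 <= k < n.+1 | ((k%:Z) == r %[mod (2 ^ alpha)%:Z])%Z) 'C(n, k).

Definition lucas_exp (alpha n : nat) : int :=
  ((n%:Z - (2 ^ alpha.-1)%:Z) %/ (totient (2 ^ alpha))%:Z)%Z.

Definition lhs_val (alpha n : nat) (r : int) : rat :=
  ((binsum_mod alpha n r)%:R : rat) * ((2 : rat) ^ (- lucas_exp alpha n)).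

From HB Require Import structures.
From mathcomp Require Import all_boot all_order all_algebra zify.
From Stdlib Require Import FunctionalExtensionality.
Import Order.TTheory GRing.Theory Num.Theory.

(* Write P f r = f r + f (r - 1); the sum of 'C(n, k) over k = r mod 2^alpha is
   P^n applied to the indicator of the multiples of 2^alpha, at r.  Put
   N = 2^(alpha-1) = phi(2^alpha) and q = N/2.  Twice that indicator is the sum
   of an N-periodic function and an N-antiperiodic one.  On these, P^N acts as
   2 (1 + K) and 2 K respectively, where
   K f r = sum_(0 < j < N) 'C(N, j)/2 f (r - j); as 'C(N, j)/2 is odd only for
   j = q, K is the shift by q modulo 2, and (1 + K)^2 vanishes modulo 2 on
   N-periodic functions.  For n = N k + s with s < N this extracts exactly the
   power 2^(k-1); the cofactor is even if k = 0 and otherwise congruent mod 2 to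
   P^s of the periodic part at r - q k (at r if k = 1), i.e. to
   'C(s, (r - q k) mod N).  Lucas' theorem on the two blocks of s and of the
   residue then gives the stated conditions. *)

Lemma odd_bin_double_oddr a c : odd 'C(2 * a, (2 * c).+1) = false.
Proof.
have := congr1 odd (mul_bin_left (2 * a) (2 * c)).
by rewrite -mulnBr !oddM /= oddM.
Qed.

Lemma odd_bin_double a c : odd 'C(2 * a, 2 * c) = odd 'C(a, c).
Proof.
elim: a c => [|a IHa] [|c] //.
rewrite !mul2n !doubleS !binS !oddD -!mul2n odd_bin_double_oddr addbF.
have -> : (2 * c).+2 = 2 * c.+1 by lia.
by rewrite !IHa -oddD -binS.
Qed.

Lemma odd_bin_lucas2 a b c d : (b < 2)%N -> (d < 2)%N ->
  odd 'C(2 * a + b, 2 * c + d) = odd 'C(a, c) && odd 'C(b, d).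
Proof.
case: b => [|[|//]] _; case: d => [|[|//]] _; rewrite ?addn0 ?addn1.
- by rewrite odd_bin_double andbT.
- by rewrite odd_bin_double_oddr andbF.
- case: c => [|c]; first by rewrite !bin0.
  have -> : 2 * c.+1 = (2 * c).+2 by lia.
  rewrite binS oddD odd_bin_double_oddr addbF.
  have -> : (2 * c).+2 = 2 * c.+1 by lia.
  by rewrite odd_bin_double andbT.
- by rewrite binS oddD odd_bin_double_oddr odd_bin_double andbT.
Qed.

Lemma odd_bin_lucas e a b c d : (b < 2 ^ e)%N -> (d < 2 ^ e)%N ->
  odd 'C(2 ^ e * a + b, 2 ^ e * c + d) = odd 'C(a, c) && odd 'C(b, d).
Proof.
elim: e a b c d => [|e IHe] a b c d.
  by rewrite !ltnS !leqn0 => /eqP-> /eqP->; rewrite !addn0 !mul1n bin0 andbT.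
move=> hb hd.
have hb2 : (b %/ 2 < 2 ^ e)%N by rewrite ltn_divLR // mulnC -expnS.
have hd2 : (d %/ 2 < 2 ^ e)%N by rewrite ltn_divLR // mulnC -expnS.
rewrite {1}(divn_eq b 2) {1}(divn_eq d 2) !(mulnC _ 2) expnS -!mulnA.
have regroup x y z : 2 * x + (2 * y + z) = 2 * (x + y) + z.
  by rewrite mulnDr addnA.
rewrite !regroup !odd_bin_lucas2 ?ltn_mod // IHe //.
by rewrite -andbA -odd_bin_lucas2 ?ltn_mod // !(mulnC 2) -!divn_eq.
Qed.

Lemma odd_bin_pow2 e j : (j < 2 ^ e)%N -> odd 'C(2 ^ e, j) = (j == 0%N).
Proof.
move=> hj; have := @odd_bin_lucas e 1 0 0 j; rewrite expn_gt0 => /(_ isT hj).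
by rewrite muln1 addn0 muln0 add0n bin0n; case: (j == 0%N).
Qed.

Lemma odd_half_bin_pow2 e j : (0 < j < 2 ^ e.+1)%N ->
  odd ('C(2 ^ e.+1, j) %/ 2) = (j == 2 ^ e).
Proof.
case: j => [//|j] /= hj; set x := 'C(2 ^ e.+1, j.+1) %/ 2.
have q_gt0 : (0 < 2 ^ e)%N by rewrite expn_gt0.
have Cx : 'C(2 ^ e.+1, j.+1) = x * 2.
  by rewrite divnK // dvdn2 odd_bin_pow2.
have diag : 2 ^ e * 'C((2 ^ e.+1).-1, j) = j.+1 * x.
  apply/eqP; rewrite -(eqn_pmul2r (isT : (0 < 2)%N)) -[j.+1 * x * 2]mulnA -Cx.
  by rewrite -mul_bin_diag mulnAC -expnSr.
apply/idP/eqP => [x_odd | jq].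
  have : (2 ^ e %| j.+1 * x)%N by rewrite -diag dvdn_mulr.
  rewrite Gauss_dvdl; last by rewrite coprimeXl // coprime2n.
  case/dvdnP=> m jm; move: hj; rewrite jm expnS.
  by case: m jm => [|[|m]] //; rewrite ?mul1n //; lia.
have -> : x = 'C((2 ^ e.+1).-1, j).
  by apply/eqP; rewrite -(eqn_pmul2l q_gt0) diag jq.
have -> : (2 ^ e.+1).-1 = 2 ^ e * 1 + j by rewrite expnS; lia.
have j_lt : (j < 2 ^ e)%N by rewrite -jq.
have := odd_bin_lucas e 1 j 0 j j_lt j_lt.
by rewrite muln0 add0n bin0 binn.
Qed.

Local Open Scope ring_scope.

Definition pascal (f : int -> int) (r : int) : int := f r + f (r - 1).

Lemma iter_pascal n f r :
  iter n pascal f r = \sum_(j < n.+1) 'C(n, j)%:Z * f (r - j%:Z).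
Proof.
elim: n r => [|n IHn] r.
  by rewrite big_ord_recl big_ord0 /= subr0 addr0 mul1r.
rewrite iterS /pascal !IHn [RHS]big_ord_recl /= bin0 mul1r subr0.
under [X in _ = _ + X]eq_bigr => i _ do rewrite /bump leq0n add1n binS PoszD mulrDl.
rewrite big_split /= addrA; congr (_ + _); last first.
  by apply: eq_bigr => i _; congr (_ * f _); lia.
rewrite big_ord_recl /= bin0 mul1r subr0; congr (_ + _).
rewrite big_ord_recr /= bin_small // mul0r addr0.
by apply: eq_bigr => i _; rewrite /bump leq0n add1n.
Qed.

Lemma iter_pascal_scale n c f :
  iter n pascal (fun r => c * f r) = fun r => c * iter n pascal f r.
Proof.
apply: functional_extensionality => r; rewrite !iter_pascal mulr_sumr.
by apply: eq_bigr => j _; rewrite mulrCA.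
Qed.

Definition multiple_ind (d t : int) : int := if (d %| t)%Z then 1 else 0.

Lemma binsum_modE alpha n r :
  (binsum_mod alpha n r)%:Z = iter n pascal (multiple_ind (2 ^ alpha)%:Z) r.
Proof.
rewrite iter_pascal /binsum_mod big_mkcond /= big_mkord.
rewrite (big_morph Posz PoszD (erefl _)); apply: eq_bigr => j _.
rewrite /multiple_ind eqz_mod_dvd -opprB rpredN.
by case: ifP; rewrite ?mulr1 ?mulr0.
Qed.

Lemma multiple_ind_periodic d t : multiple_ind d (t + d) = multiple_ind d t.
Proof. by rewrite /multiple_ind rpredDr // dvdzz. Qed.

Lemma multiple_ind_double d t : d != 0 ->
  multiple_ind d t = multiple_ind (d * 2) t + multiple_ind (d * 2) (t + d).
Proof.
move=> d_neq0; rewrite /multiple_ind.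
have d_dvd_2d : (d %| d * 2)%Z by rewrite dvdz_mulr.
have [/dvdzP[m ->]|d_ndvd] := boolP (d %| t)%Z.
  have -> : m * d + d = (m + 1) * d by rewrite mulrDl mul1r.
  rewrite !(mulrC _ d) !dvdz_mul2l //.
  by case: ifP; case: ifP => //; lia.
case: ifP => [/(dvdz_trans d_dvd_2d) | _]; first by rewrite (negPf d_ndvd).
case: ifP => // /(dvdz_trans d_dvd_2d).
by rewrite rpredDr ?dvdzz // (negPf d_ndvd).
Qed.

Lemma iter_pascal_multiple_ind s (d : nat) r : (s < d)%N ->
  iter s pascal (multiple_ind d%:Z) r = 'C(s, `|(r %% d%:Z)%Z|)%:Z.
Proof.
move=> s_lt_d; rewrite iter_pascal.
have d_neq0 : d%:Z != 0 by rewrite eqz_nat -lt0n; apply: leq_ltn_trans s_lt_d.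
set x := `|(r %% d%:Z)%Z|%N.
have xE : x%:Z = (r %% d%:Z)%Z by rewrite /x gez0_abs // modz_ge0.
have indE (j : 'I_s.+1) : multiple_ind d%:Z (r - j%:Z) = (j == x :> nat)%:Z.
  rewrite /multiple_ind -eqz_mod_dvd -xE (modz_small (m := j%:Z)).
    by rewrite eqz_nat eq_sym; case: eqP.
  by have := ltn_ord j; lia.
under eq_bigr => j _ do rewrite indE.
have [x_le_s | s_lt_x] := ltnP x s.+1.
  rewrite (bigD1 (Ordinal x_le_s)) //= eqxx mulr1 big1 ?addr0 // => j /eqP j_neq.
  by case: eqP => [j_eq|]; [case: j_neq; apply: val_inj | rewrite mulr0].
rewrite bin_small // big1 // => j _.
by case: eqP => [j_eq|]; [have := ltn_ord j; lia | rewrite mulr0].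
Qed.

Definition periodic (p : int) (f : int -> int) := forall t, f (t + p) = f t.
Definition antiperiodic (p : int) (f : int -> int) := forall t, f (t + p) = - f t.

Lemma iter_pascal_periodic n p f : periodic p f -> periodic p (iter n pascal f).
Proof.
move=> f_per t; rewrite !iter_pascal; apply: eq_bigr => j _.
by rewrite addrAC f_per.
Qed.

Lemma iter_pascal_antiperiodic n p f :
  antiperiodic p f -> antiperiodic p (iter n pascal f).
Proof.
move=> f_anti t; rewrite !iter_pascal -sumrN; apply: eq_bigr => j _.
by rewrite addrAC f_anti mulrN.
Qed.

Section PascalPowerOfTwo.

Variable e : nat.
Local Notation q := (2 ^ e)%N.
Local Notation N := (2 ^ e.+1)%N.

Definition pascal_half_anti (f : int -> int) (r : int) : int :=
  \sum_(j < N.-1) ('C(N, j.+1) %/ 2)%:Z * f (r - j.+1%:Z).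

Definition pascal_half_per (f : int -> int) (r : int) : int :=
  f r + pascal_half_anti f r.

Lemma iter_pascal_pow2 f r :
  iter N pascal f r = f r + f (r - N%:Z) + 2 * pascal_half_anti f r.
Proof.
have N_gt0 : (0 < N)%N by rewrite expn_gt0.
have even_mid j : (j < N.-1)%N -> 'C(N, j.+1) = ('C(N, j.+1) %/ 2 * 2)%N.
  by move=> j_lt; rewrite divnK // dvdn2 odd_bin_pow2 // -ltn_predRL.
rewrite iter_pascal /pascal_half_anti big_ord_recl /= bin0 mul1r subr0 -addrA.
congr (_ + _); move: even_mid; rewrite -(prednK N_gt0) /= => even_mid.
rewrite big_ord_recr /= /bump leq0n add1n binn mul1r addrC mulr_sumr.
apply: congr1; apply: eq_bigr => j _.
by rewrite /bump leq0n add1n {1}even_mid // PoszM mulrA [_ * 2]mulrC.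
Qed.

Lemma iter_pascal_pow2_antiperiodic f : antiperiodic N%:Z f ->
  iter N pascal f = fun r => 2 * pascal_half_anti f r.
Proof.
move=> f_anti; apply: functional_extensionality => r.
rewrite iter_pascal_pow2; have := f_anti (r - N%:Z); rewrite subrK => ->.
by rewrite addNr add0r.
Qed.

Lemma iter_pascal_pow2_periodic f : periodic N%:Z f ->
  iter N pascal f = fun r => 2 * pascal_half_per f r.
Proof.
move=> f_per; apply: functional_extensionality => r.
rewrite iter_pascal_pow2; have := f_per (r - N%:Z); rewrite subrK => <-.
by rewrite /pascal_half_per; lia.
Qed.

Lemma pascal_half_anti_periodic p f : periodic p f -> periodic p (pascal_half_anti f).
Proof. by move=> f_per t; apply: eq_bigr => j _; rewrite addrAC f_per. Qed.

Lemma pascal_half_anti_antiperiodic p f :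
  antiperiodic p f -> antiperiodic p (pascal_half_anti f).
Proof.
move=> f_anti t; rewrite /pascal_half_anti -sumrN; apply: eq_bigr => j _.
by rewrite addrAC f_anti mulrN.
Qed.

Lemma pascal_half_per_periodic p f : periodic p f -> periodic p (pascal_half_per f).
Proof. by move=> f_per t; rewrite /pascal_half_per f_per pascal_half_anti_periodic. Qed.

Lemma iter_pascal_pow2_mul_antiperiodic k f : antiperiodic N%:Z f ->
  iter (N * k) pascal f = fun r => 2 ^+ k * iter k pascal_half_anti f r.
Proof.
elim: k f => [|k IHk] f f_anti.
  by apply: functional_extensionality => r; rewrite muln0 mul1r.
rewrite mulnS addnC iterD iter_pascal_pow2_antiperiodic // iter_pascal_scale.
rewrite IHk; last exact: pascal_half_anti_antiperiodic.
by apply: functional_extensionality => r; rewrite iterSr exprS mulrA.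
Qed.

Lemma iter_pascal_pow2_mul_periodic k f : periodic N%:Z f ->
  iter (N * k) pascal f = fun r => 2 ^+ k * iter k pascal_half_per f r.
Proof.
elim: k f => [|k IHk] f f_per.
  by apply: functional_extensionality => r; rewrite muln0 mul1r.
rewrite mulnS addnC iterD iter_pascal_pow2_periodic // iter_pascal_scale.
rewrite IHk; last exact: pascal_half_per_periodic.
by apply: functional_extensionality => r; rewrite iterSr exprS mulrA.
Qed.

Lemma pascal_half_anti_mod2 f r : (2 %| pascal_half_anti f r - f (r - q%:Z))%Z.
Proof.
have q_gt0 : (0 < q)%N by rewrite expn_gt0.
have mid_lt : (q.-1 < N.-1)%N by rewrite expnS; lia.
rewrite /pascal_half_anti (bigD1 (Ordinal mid_lt)) //= prednK // addrAC.
apply: rpredD.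
  set c := ('C(N, q) %/ 2)%N.
  have c_odd : odd c by rewrite odd_half_bin_pow2 ?eqxx // expnS; lia.
  have c_half := odd_double_half c; rewrite c_odd -muln2 in c_half.
  rewrite -[X in _ - X]mul1r -mulrBl dvdz_mulr //.
  by apply/dvdzP; exists (c./2)%:Z; lia.
apply: rpred_sum => j j_neq; apply: dvdz_mulr; rewrite dvdzE /= dvdn2.
rewrite odd_half_bin_pow2 /= -?ltn_predRL //.
by apply: contra_neq j_neq => j_eq; apply: val_inj; rewrite /= -j_eq.
Qed.

Lemma pascal_half_per_mod2 f r :
  (2 %| pascal_half_per f r - f r - f (r - q%:Z))%Z.
Proof. by rewrite /pascal_half_per [f r + _]addrC addrK pascal_half_anti_mod2. Qed.

Lemma pascal_half_per_even g r :
  (forall t, (2 %| g t)%Z) -> (2 %| pascal_half_per g r)%Z.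
Proof. by move=> g_even; rewrite rpredD // rpred_sum // => j _; apply: dvdz_mull. Qed.

Lemma pascal_half_per2_even f r : periodic N%:Z f ->
  (2 %| pascal_half_per (pascal_half_per f) r)%Z.
Proof.
move=> f_per; set g := pascal_half_per f.
have f_shift2 : f (r - q%:Z - q%:Z) = f r.
  by rewrite -f_per expnS; congr f; lia.
have := pascal_half_per_mod2 g r; have := pascal_half_per_mod2 f r.
have := pascal_half_per_mod2 f (r - q%:Z); rewrite f_shift2 -/g.
move=> shifted_even f_even g_even.
have -> : pascal_half_per g r = (pascal_half_per g r - g r - g (r - q%:Z))
    + (g r - f r - f (r - q%:Z)) + (g (r - q%:Z) - f (r - q%:Z) - f r)
    + (f r + f (r - q%:Z)) * 2 by lia.
apply: rpredD; last exact/dvdz_mull/dvdzz.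
by apply: rpredD; first apply: rpredD.
Qed.

Lemma iter_pascal_half_per_even k f r : (1 < k)%N -> periodic N%:Z f ->
  (2 %| iter k pascal_half_per f r)%Z.
Proof.
move=> k_gt1 f_per; rewrite -(subnK k_gt1) iterD.
elim: (k - 2)%N r => [|i IHi] r; first exact: pascal_half_per2_even.
exact: pascal_half_per_even.
Qed.

Lemma iter_pascal_half_anti_mod2 k g r :
  (2 %| iter k pascal_half_anti g r - g (r - (q * k)%N%:Z))%Z.
Proof.
elim: k r => [|k IHk] r; first by rewrite muln0 subr0 subrr.
rewrite iterS mulnS PoszD opprD addrA.
have := rpredD (pascal_half_anti_mod2 (iter k pascal_half_anti g) r) (IHk (r - q%:Z)).
by rewrite addrA subrK.
Qed.

Definition ind_per : int -> int := multiple_ind N%:Z.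

Definition ind_anti (t : int) : int :=
  multiple_ind (2 ^ e.+2)%N%:Z t - multiple_ind (2 ^ e.+2)%N%:Z (t + N%:Z).

Lemma ind_per_periodic : periodic N%:Z ind_per.
Proof. exact: multiple_ind_periodic. Qed.

Lemma ind_anti_antiperiodic : antiperiodic N%:Z ind_anti.
Proof.
move=> t; rewrite /ind_anti -addrA -PoszD addnn -mul2n -expnS.
by rewrite multiple_ind_periodic opprB.
Qed.

Lemma ind_per_split t : ind_per t =
  multiple_ind (2 ^ e.+2)%N%:Z t + multiple_ind (2 ^ e.+2)%N%:Z (t + N%:Z).
Proof.
rewrite /ind_per multiple_ind_double -?PoszM -?expnSr //.
by rewrite eqz_nat expn_eq0.
Qed.

Lemma ind_per_anti_mod2 t : (2 %| ind_per t - ind_anti t)%Z.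
Proof.
rewrite ind_per_split /ind_anti; apply/dvdzP.
by exists (multiple_ind (2 ^ e.+2)%N%:Z (t + N%:Z)); lia.
Qed.

Lemma double_iter_pascal_multiple_ind n r :
  2 * iter n pascal (multiple_ind (2 ^ e.+2)%N%:Z) r
  = iter n pascal ind_per r + iter n pascal ind_anti r.
Proof.
rewrite !iter_pascal mulr_sumr -big_split; apply: eq_bigr => j _ /=.
by rewrite ind_per_split /ind_anti; lia.
Qed.

Definition binsum_cofactor k s r : int :=
  iter k pascal_half_per (iter s pascal ind_per) r
  + iter k pascal_half_anti (iter s pascal ind_anti) r.

Lemma binsum_mod_core k s r :
  2 * (binsum_mod e.+2 (N * k + s) r)%:Z = 2 ^+ k * binsum_cofactor k s r.
Proof.
rewrite binsum_modE double_iter_pascal_multiple_ind !iterD.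
rewrite iter_pascal_pow2_mul_periodic; last exact/iter_pascal_periodic/ind_per_periodic.
rewrite iter_pascal_pow2_mul_antiperiodic ?mulrDr //.
exact/iter_pascal_antiperiodic/ind_anti_antiperiodic.
Qed.

(* For k >= 2 the periodic part dies mod 2 after two steps and only the
   antiperiodic part, shifted by q at each step, survives; for k = 1 the two
   shifted terms cancel and the periodic part survives unshifted. *)
Lemma odd_binsum_cofactor k s r : (s < N)%N ->
  ~~ (2 %| binsum_cofactor k s r)%Z =
  (0 < k)%N && odd 'C(s, `|((r - (q * (if k == 1%N then 0 else k))%N%:Z) %% N%:Z)%Z|).
Proof.
move=> s_lt_N; set U := iter s pascal ind_per; set T := iter s pascal ind_anti.
have U_per : periodic N%:Z U by apply/iter_pascal_periodic/ind_per_periodic.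
have UT_mod2 x : (2 %| U x - T x)%Z.
  rewrite /U /T !iter_pascal -sumrB rpred_sum // => j _.
  by rewrite -mulrBr dvdz_mull ?ind_per_anti_mod2.
have [-> | k_gt0] := posnP k.
  apply/negbF; rewrite /binsum_cofactor /= -/U -/T -[U r](subrK (T r)) -addrA.
  by rewrite rpredD //; apply/dvdzP; exists (T r); lia.
set t := (r - _)%R; suff core_mod2 : (2 %| binsum_cofactor k s r - U t)%Z.
  rewrite -(subrK (U t) (binsum_cofactor k s r)) rpredDl // /U.
  by rewrite iter_pascal_multiple_ind // dvdzE /= dvdn2 negbK.
rewrite /binsum_cofactor -/U -/T; have [k1 | k_neq1] := eqVneq k 1%N.
  rewrite /t k1 /= muln0 subr0.
  have -> : pascal_half_per U r + pascal_half_anti T r - U r =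
      (pascal_half_per U r - U r - U (r - q%:Z))
      + (pascal_half_anti T r - T (r - q%:Z)) - (U (r - q%:Z) - T (r - q%:Z))
      + U (r - q%:Z) * 2 by lia.
  apply: rpredD; last exact/dvdz_mull/dvdzz.
  apply: rpredB; last exact: UT_mod2.
  by apply: rpredD; [apply: pascal_half_per_mod2 | apply: pascal_half_anti_mod2].
have k_gt1 : (1 < k)%N by rewrite ltn_neqAle eq_sym k_neq1.
set A := iter k _ U r; set B := iter k _ T r.
have -> : A + B - U t = A + (B - T t) - (U t - T t) by lia.
apply: rpredB; last exact: UT_mod2.
apply: rpredD; first exact: iter_pascal_half_per_even.
by rewrite /t (negPf k_neq1) iter_pascal_half_anti_mod2.
Qed.

End PascalPowerOfTwo.

Lemma lucas_exp_pow2 e k s : (s < 2 ^ e.+1)%N ->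
  lucas_exp e.+2 (2 ^ e.+1 * k + s) = k%:Z - 1.
Proof.
move=> s_lt; rewrite /lucas_exp totient_pfactor //= mul1n.
have N_neq0 : (2 ^ e.+1)%N%:Z != 0 by rewrite eqz_nat expn_eq0.
have -> : (2 ^ e.+1 * k + s)%N%:Z - (2 ^ e.+1)%N%:Z
    = (k%:Z - 1) * (2 ^ e.+1)%N%:Z + s%:Z by rewrite PoszD PoszM; lia.
by rewrite divzMDl // divz_small ?addr0 // lez_nat /= ltz_nat.
Qed.

Lemma lhs_val_binsum_cofactor e k s r : (s < 2 ^ e.+1)%N ->
  lhs_val e.+2 (2 ^ e.+1 * k + s) r = (binsum_cofactor e k s r)%:~R.
Proof.
move=> s_lt; have core_eq := congr1 (intmul (1 : rat)) (binsum_mod_core e k s r).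
rewrite /= !intrM rmorphXn -[(2%:~R : rat)]/(2 : rat) in core_eq.
rewrite /lhs_val lucas_exp_pow2 // opprB expfzDr // expr1z -exprnN mulrA.
rewrite -[_%:R]/((binsum_mod _ _ _)%:Z%:~R) [_ * 2]mulrC core_eq.
rewrite [2 ^+ k * _]mulrC mulfK //.
exact: expf_neq0.
Qed.

Lemma intr_odd_ratP (x : int) :
  (exists m : int, x%:~R = (2 * m + 1)%:~R :> rat) <-> ~~ (2 %| x)%Z.
Proof.
split=> [[m /intr_inj ->] | x_odd]; first lia.
by exists (x %/ 2)%Z; congr intmul; lia.
Qed.

Lemma absz_mod_pow2S e t :
  `|(t %% (2 ^ e.+1)%N%:Z)%Z|%N
  = (2 ^ e * `|((t %/ (2 ^ e)%N%:Z)%Z %% 2)%Z| + `|(t %% (2 ^ e)%N%:Z)%Z|)%N.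
Proof.
set q := (2 ^ e)%N; have q_neq0 : q%:Z != 0 by rewrite eqz_nat expn_eq0.
set a := (t %/ q%:Z)%Z; set b := (t %% q%:Z)%Z; set d := (a %% 2)%Z.
have b_ge0 : 0 <= b by apply: modz_ge0.
have b_lt : b < q%:Z by apply: ltz_pmod; rewrite ltz_nat expn_gt0.
have [d_ge0 d_lt2] : 0 <= d /\ d < 2 by split; [apply: modz_ge0 | apply: ltz_pmod].
have tE : t = (a %/ 2)%Z * (2 ^ e.+1)%N%:Z + (q%:Z * d + b).
  rewrite {1}(divz_eq t q%:Z) -/a -/b {1}(divz_eq a 2) -/d expnS PoszM; lia.
apply/eqP; rewrite -eqz_nat PoszD PoszM !gez0_abs //; last first.
  by apply: modz_ge0; rewrite eqz_nat expn_eq0.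
rewrite {1}tE modzMDl modz_small // expnS PoszM -/q.
by apply/andP; split; nia.
Qed.

Lemma odd_bin_mod_pow2S e s t : (s < 2 ^ e.+1)%N ->
  odd 'C(s, `|(t %% (2 ^ e.+1)%N%:Z)%Z|)
  = odd 'C(s %/ 2 ^ e, `|((t %/ (2 ^ e)%N%:Z)%Z %% 2)%Z|)
    && odd 'C(s %% 2 ^ e, `|(t %% (2 ^ e)%N%:Z)%Z|).
Proof.
move=> s_lt; have q_gt0 : (0 < 2 ^ e)%N by rewrite expn_gt0.
rewrite absz_mod_pow2S {1}(divn_eq s (2 ^ e)) mulnC odd_bin_lucas ?ltn_mod //.
rewrite -ltz_nat gez0_abs ?modz_ge0 ?ltz_pmod ?ltz_nat //.
by rewrite eqz_nat -lt0n.
Qed.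

Lemma odd_bin_digit_condition (k s1 : nat) (rs : int) : (s1 < 2)%N ->
  (0 < k)%N && odd 'C(s1, `|((rs - (if k == 1%N then 0%N else k)%:Z) %% 2)%Z|)
  <-> ((2 < 2 * k + s1)%N /\ ~ ((2 * k + s1)%N%:Z = 2 * rs + 2 %[mod 4])%Z)
      \/ ((2 * k + s1)%N = 2%N /\ (2 %| rs)%Z).
Proof.
move=> s1_lt2; have [-> | k_gt0] := posnP k; first by split=> //; lia.
have [bit_eq | bit_eq] : ((rs - (if k == 1%N then 0%N else k)%:Z) %% 2 = 0
    \/ (rs - (if k == 1%N then 0%N else k)%:Z) %% 2 = 1)%Z.
  by lia.
all: rewrite bit_eq; case: s1 s1_lt2 => [|[|//]] _ /=; split=> //.
all: move: bit_eq; case: eqP; lia.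
Qed.

Lemma divzBMl (r : int) (q m : nat) : (0 < q)%N ->
  ((r - (q * m)%N%:Z) %/ q%:Z)%Z = (r %/ q%:Z)%Z - m%:Z.
Proof.
move=> q_gt0; rewrite PoszM mulrC -mulNr addrC divzMDl; first by rewrite addrC.
by rewrite eqz_nat -lt0n.
Qed.

Lemma modzBMl (r : int) (q m : nat) : ((r - (q * m)%N%:Z) %% q%:Z)%Z = (r %% q%:Z)%Z.
Proof. by rewrite PoszM mulrC -mulNr addrC modzMDl. Qed.

Local Close Scope ring_scope.

Theorem corollary1p2 (alpha n : nat) (r : int) (halpha : (2 <= alpha)%N) :
  (exists m : int, lhs_val alpha n r = ((2 * m + 1)%R%:~R : rat))
  <->
  (odd 'C(n %% 2 ^ (alpha - 2),
          `|(r %% (2 ^ (alpha - 2))%:Z)%Z|%N)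
   /\ (((2 < n %/ 2 ^ (alpha - 2))%N /\
        ~ ((n %/ 2 ^ (alpha - 2))%:Z
             = 2 * (r %/ (2 ^ (alpha - 2))%:Z)%Z + 2 %[mod 4])%Z)
       \/ ((n %/ 2 ^ (alpha - 2))%N = 2%N /\
           (2 %| (r %/ (2 ^ (alpha - 2))%:Z)%Z)%Z))).
Proof.
case: alpha halpha => [|[|e]] // _; rewrite subn2 /=.
have [k [s [-> s_lt]]] : exists k s, n = 2 ^ e.+1 * k + s /\ s < 2 ^ e.+1.
  by exists (n %/ 2 ^ e.+1), (n %% 2 ^ e.+1); rewrite mulnC -divn_eq ltn_mod expn_gt0.
have q_gt0 : 0 < 2 ^ e by rewrite expn_gt0.
have s_div_lt2 : s %/ 2 ^ e < 2 by rewrite ltn_divLR // -expnS.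
rewrite lhs_val_binsum_cofactor // intr_odd_ratP odd_binsum_cofactor // odd_bin_mod_pow2S //.
rewrite divzBMl // modzBMl expnS mulnAC divnMDl // modnMDl.
rewrite andbA andbC.
split=> [/andP[-> /(odd_bin_digit_condition _ _ _ s_div_lt2)] // | [-> cond]].
exact/(odd_bin_digit_condition _ _ _ s_div_lt2).
Qed.
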